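(* Let $n,m\ge 1$ and let $(\mathbf R,s),(\mathbf R',s'):n\to m$ be 1-morphisms of $\mathbf{2Mat}_{\mathbb C}$. Then: (i) $(\mathbf R,s)$ is invertible if and only if $n=m$ and $\mathbf R$ is a permutation matrix; (ii) $(\mathbf R,s)$ and $(\mathbf R',s')$ are 2-isomorphic if and only if $\mathbf R=\mathbf R'$, and a 2-morphism $\mathsf T:(\mathbf R,s)\Rightarrow(\mathbf R,s')$ is invertible if and only if all its nonempty entries are nonsingular matrices; (iii) $(\mathbf R,s)$ is an equivalence if and only if it is invertible.
   Context: $\mathbf{2Mat}_{\mathbb C}$ is the following 2-category. Objects: integers $n\ge0$. For $n,m\ge1$ a 1-morphism $n\to m$ is a pair $(\mathbf R,s)$ with $\mathbf R=(R_{ij})$ an $m\times n$ matrix of natural numbers (rank matrix) and $s=(s_1,\dots,s_m)$ a gauge: for each $\mathbf a\in\mathbb N^n$ and $i$, $s_i(\mathbf a)\in GL((\mathbf R\mathbf a)_i,\mathbb C)$ (with $s_i(\mathbf a)=1$ if $(\mathbf R\mathbf a)_i=0$), normalized by $s_i(\mathbf e_j)=\mathbf I_{R_{ij}}$ ($\mathbf e_j$ the standard basis vectors). If $n=0$ or $m=0$ there is a unique 1-morphism $n\to m$ with only its identity 2-morphism. A 2-morphism $\mathsf T:(\mathbf R,s)\Rightarrow(\mathbf R',s')$ is an $m\times n$ array whose $(i,j)$ entry $\mathsf T_{ij}$ is a complex $R'_{ij}\times R_{ij}$ matrix if $R_{ij},R'_{ij}\neq0$ and is empty otherwise. Vertical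 composition is entrywise matrix product, $(\mathsf T'\cdot\mathsf T)_{ij}=\mathsf T'_{ij}\mathsf T_{ij}$ (with empty or zero matrices as appropriate). The composite of $(\mathbf R,s):n\to m$ and $(\tilde{\mathbf R},\tilde s):m\to p$ is $(\tilde{\mathbf R}\mathbf R,\tilde s\ast s)$ with $(\tilde s\ast s)_k(\mathbf a)=\tilde s_k(\mathbf R\mathbf a)\big(\bigoplus_{i}\mathbf I_{\tilde R_{ki}}\otimes s_i(\mathbf a)\big)\mathbf P(\tilde{\mathbf R}_k,\mathbf R,\mathbf a)\big(\bigoplus_j \tilde s_k(\mathbf R\mathbf e_j)^{-1}\otimes\mathbf I_{a_j}\big)$, where $\otimes$ is the Kronecker product, $\tilde{\mathbf R}_k$ is the $k$-th row of $\tilde{\mathbf R}$ and $\mathbf P(\tilde{\mathbf R}_k,\mathbf R,\mathbf a)$ is a fixed permutation matrix of order $\sum_{i,j}\tilde R_{ki}R_{ij}a_j$ (part of the construction of $\mathbf{2Mat}_{\mathbb C}$) which is the identity whenever $\tilde{\mathbf R}_k$ is a standard basis vector, $\mathbf a$ is a standard basis vector, $\mathbf R$ is an identity matrix, or $\mathbf R$ has a single column. Horizontal composition of $\mathsf T:(\mathbf R,s)\Rightarrow(\mathbf R',s'):n\to m$ and $\tilde{\mathsf T}:(\tilde{\mathbf R},\tilde s)\Rightarrow(\tilde{\mathbf R}',\tilde s'):m\to p$ is $(\tilde{\mathsf T}\circ\mathsf T)_{kj}=\tilde s'_k(\mathbf R'\mathbf e_j)\big(\bigoplus_i\tilde{\mathsf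 T}_{ki}\otimes\mathsf T_{ij}\big)\tilde s_k(\mathbf R\mathbf e_j)^{-1}$. The identity of $n$ is $(\mathbf I_n,\mathbf I)$ with $\mathbf I$ the trivial gauge (all $s_i(\mathbf a)$ identity matrices), and identity 2-morphisms have identity matrices as nonempty entries. A 1-morphism is an equivalence if it is invertible up to invertible 2-morphisms. *)

From mathcomp Require Import all_boot all_algebra.
From mathcomp Require Import reals complex mxtens.

Set Implicit Arguments.
Unset Strict Implicit.
Unset Printing Implicit Defensive.

Import GRing.Theory.
Local Open Scope ring_scope.

(* a square matrix of any size, packed with its size (for comparing matrices
   whose sizes are only propositionally equal) *)
Definition dsq (F : Type) (d : nat) (M : 'M[F]_d) : {k : nat & 'M[F]_k} :=
  existT (fun k => 'M[F]_k) d M.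

Definition ebv (n : nat) (j : 'I_n) : 'cV[nat]_n := delta_mx j ord0.

(* a gauge for a rank matrix R : m x n : s a i in GL((R a)_i) *)
Definition gauge_t (F : fieldType) (n m : nat) (R : 'M[nat]_(m, n)) :=
  forall (a : 'cV[nat]_n) (i : 'I_m), 'M[F]_((R *m a) i ord0).

Record mor1d (F : fieldType) (n m : nat) := Mor1d {
  rk : 'M[nat]_(m, n);
  gauge : gauge_t F rk }.

Definition is_mor1 (F : fieldType) n m (f : mor1d F n m) : Prop :=
  (forall a i, gauge f a i \in unitmx) /\
  (forall i j, dsq (gauge f (ebv j) i) = dsq (1%:M : 'M[F]_(rk f i j))).

Definition mor1_eq (F : fieldType) n m (f g : mor1d F n m) : Prop :=
  rk f = rk g /\ forall a i, dsq (gauge f a i) = dsq (gauge g a i).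

(* order of P(Rt_k, R, a) : sum_{i,j} Rt_ki R_ij a_j *)
Definition psize (m n : nat) (r : 'rV[nat]_m) (R : 'M[nat]_(m, n))
  (a : 'cV[nat]_n) : nat :=
  (\sum_(i < m) \sum_(j < n) r ord0 i * R i j * a j ord0)%N.

(* The fixed family of permutation matrices P(Rt_k, R, a) that is part of
   the construction of 2Mat, with the properties stated in the paper. *)
Record perm_datum (F : fieldType) := PermDatum {
  pmx : forall m n (r : 'rV[nat]_m) (R : 'M[nat]_(m, n)) (a : 'cV[nat]_n),
          'M[F]_(psize r R a);
  pmx_perm : forall m n r R a, is_perm_mx (@pmx m n r R a);
  pmx_id_row : forall m n (i : 'I_m) R a,
      @pmx m n (delta_mx ord0 i) R a = 1%:M;
  pmx_id_vec : forall m n r R (j : 'I_n), @pmx m n r R (ebv j) = 1%:M;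
  pmx_id_idR : forall n r a, @pmx n n r (1%:M : 'M[nat]_n) a = 1%:M;
  pmx_id_col : forall m r (R : 'M[nat]_(m, 1)) a, @pmx m 1 r R a = 1%:M }.

(* product of matrices whose inner sizes agree propositionally *)
Definition cmul (F : fieldType) (a b c d : nat) (A : 'M[F]_(a, b))
  (B : 'M[F]_(c, d)) : 'M[F]_(a, d) :=
  A *m conform_mx (0 : 'M[F]_(b, d)) B.

(* gauge of the composite (g o f), f = (R, s) : n -> m, g = (Rt, st) : m -> p:
   st_k(Ra) (+_i I_{Rt_ki} (x) s_i(a)) P(Rt_k,R,a) (+_j st_k(R e_j)^-1 (x) I_{a_j}) *)
Definition comp_gauge (F : fieldType) (P : perm_datum F) n m p
  (f : mor1d F n m) (g : mor1d F m p) : gauge_t F (rk g *m rk f) :=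
  fun a k =>
    let A1 := gauge g (rk f *m a) k in
    let A2 := \mxdiag_(i < m) ((1%:M : 'M[F]_(rk g k i)) *t gauge f a i) in
    let A3 := pmx P (row k (rk g)) (rk f) a in
    let A4 := \mxdiag_(j < n)
                (invmx (gauge g (rk f *m ebv j) k) *t (1%:M : 'M[F]_(a j ord0))) in
    conform_mx (0 : 'M[F]_(((rk g *m rk f) *m a) k ord0))
      (cmul (cmul (cmul A1 A2) A3) A4).

Definition comp1 (F : fieldType) (P : perm_datum F) n m p
  (f : mor1d F n m) (g : mor1d F m p) : mor1d F n p :=
  @Mor1d F n p (rk g *m rk f) (comp_gauge P f g).

Definition id1 (F : fieldType) (n : nat) : mor1d F n n :=
  @Mor1d F n n 1%:M (fun a i => 1%:M).

Definition invertible1 (F : fieldType) (P : perm_datum F) n m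
  (f : mor1d F n m) : Prop :=
  exists g : mor1d F m n, is_mor1 g /\
    mor1_eq (comp1 P f g) (id1 F n) /\ mor1_eq (comp1 P g f) (id1 F m).

(* 2-morphisms: (i,j) entry is an R'_ij x R_ij matrix (0-sized = empty) *)
Definition mor2 (F : fieldType) n m (f g : mor1d F n m) :=
  forall (i : 'I_m) (j : 'I_n), 'M[F]_(rk g i j, rk f i j).

Definition vcomp (F : fieldType) n m (f g h : mor1d F n m)
  (T' : mor2 g h) (T : mor2 f g) : mor2 f h :=
  fun i j => T' i j *m T i j.

Definition id2 (F : fieldType) n m (f : mor1d F n m) : mor2 f f :=
  fun i j => 1%:M.

Definition inv2 (F : fieldType) n m (f g : mor1d F n m) (T : mor2 f g) : Prop :=
  exists T' : mor2 g f,
    (forall i j, vcomp T' T i j = id2 f i j) /\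
    (forall i j, vcomp T T' i j = id2 g i j).

Definition iso2 (F : fieldType) n m (f g : mor1d F n m) : Prop :=
  exists T : mor2 f g, inv2 T.

Definition equivalence1 (F : fieldType) (P : perm_datum F) n m
  (f : mor1d F n m) : Prop :=
  exists g : mor1d F m n, is_mor1 g /\
    iso2 (comp1 P f g) (id1 F n) /\ iso2 (comp1 P g f) (id1 F m).

(* A matrix over N with a two-sided inverse over N is a permutation matrix:
   in (A B)_ii = 1 exactly one product A_il B_li is nonzero, and then
   (B A)_lj >= B_li A_ij forces row i of A to be the basis vector e_l.
   Since a 2-isomorphism has invertible, hence square, entries, 2-isomorphic
   1-morphisms have equal rank matrices; so the rank matrices of an equivalence
   are mutually inverse and form a permutation matrix.  Conversely, for a
   permutation rank matrix the reindexed pointwise inverse of the gauge is an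
   inverse 1-morphism: in each composite gauge all blocks but one are empty,
   and the remaining one is s_i(a)^-1 s_i(a) = I. *)

From mathcomp Require Import all_boot all_algebra.
From mathcomp Require Import reals complex mxtens.
From mathcomp Require Import all_order all_fingroup.
From Stdlib Require Import Eqdep_dec.
Import GRing.Theory.
Local Open Scope ring_scope.

Set Implicit Arguments.
Unset Strict Implicit.

Section PackedMatrices.
Variable F : fieldType.

(* Packing a matrix with its dimensions compares matrices whose sizes are only
   propositionally equal, which is the situation for gauge values. *)
Definition packmx a b (A : 'M[F]_(a, b)) : {p : nat * nat & 'M[F]_(p.1, p.2)} :=
  existT (fun p : nat * nat => 'M[F]_(p.1, p.2)) (a, b) A.

Lemma packmx_inj a b (A B : 'M[F]_(a, b)) : packmx A = packmx B -> A = B.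
Proof.
apply: Eqdep_dec.inj_pair2_eq_dec => x y.
by case: (x =P y); [left|right].
Qed.

Lemma packmx_dims a b c d (A : 'M[F]_(a, b)) (B : 'M[F]_(c, d)) :
  packmx A = packmx B -> a = c /\ b = d.
Proof. by move=> /(congr1 (@projT1 _ _)) [-> ->]. Qed.

Lemma packmx_dsq a b (A : 'M[F]_a) (B : 'M[F]_b) :
  packmx A = packmx B -> dsq A = dsq B.
Proof. by move=> h; have [e _] := packmx_dims h; subst b; rewrite (packmx_inj h). Qed.

Lemma dsq_packmx a b (A : 'M[F]_a) (B : 'M[F]_b) :
  dsq A = dsq B -> packmx A = packmx B.
Proof.
move=> h; have e : a = b by move: h => /(congr1 (@projT1 _ _)).
subst b; have -> // : A = B.
apply: (Eqdep_dec.inj_pair2_eq_dec _ _ _ _ _ _ h) => x y.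
by case: (x =P y); [left|right].
Qed.

Lemma packmx_cmul a b c d (A : 'M[F]_(a, b)) (B : 'M[F]_(c, d)) x y z
    (A' : 'M[F]_(x, y)) (B' : 'M[F]_(y, z)) :
  packmx A = packmx A' -> packmx B = packmx B' -> packmx (cmul A B) = packmx (A' *m B').
Proof.
move=> hA hB; have [? ?] := packmx_dims hA; have [? ?] := packmx_dims hB; subst.
by rewrite (packmx_inj hA) (packmx_inj hB) /cmul conform_mx_id.
Qed.

Lemma packmx_conform a b c d (B : 'M[F]_(a, b)) (A : 'M[F]_(c, d)) :
  c = a -> d = b -> packmx (conform_mx B A) = packmx A.
Proof. by move=> ? ?; subst; rewrite conform_mx_id. Qed.

Lemma packmx_castmx a b c d (e : (a = c) * (b = d)) (A : 'M[F]_(a, b)) :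
  packmx (castmx e A) = packmx A.
Proof. by case: e => ? ?; subst; rewrite castmx_id. Qed.

Lemma packmx_invmx a b (A : 'M[F]_a) (B : 'M[F]_b) :
  packmx A = packmx B -> packmx (invmx A) = packmx (invmx B).
Proof. by move=> h; have [e _] := packmx_dims h; subst; rewrite (packmx_inj h). Qed.

Lemma packmx_unitmx a b (A : 'M[F]_a) (B : 'M[F]_b) :
  packmx A = packmx B -> B \in unitmx -> A \in unitmx.
Proof. by move=> h; have [e _] := packmx_dims h; subst; rewrite (packmx_inj h). Qed.

Lemma packmx1 a b : a = b -> packmx (1%:M : 'M[F]_a) = packmx (1%:M : 'M[F]_b).
Proof. by move=> ->. Qed.

Lemma packmx_tens1l d b (M : 'M[F]_b) :
  d = 1%N -> packmx ((1%:M : 'M[F]_d) *t M) = packmx M.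
Proof. by move=> ?; subst; rewrite tens_scalar1mx packmx_castmx. Qed.

Lemma packmx_tens1r d b (X : 'M[F]_d) : packmx X = packmx (1%:M : 'M[F]_1) ->
  packmx (X *t (1%:M : 'M[F]_b)) = packmx (1%:M : 'M[F]_b).
Proof.
move=> h; have [e _] := packmx_dims h; subst.
by rewrite (packmx_inj h) tens_scalar1mx packmx_castmx.
Qed.

Lemma packmx_mxdiag_single n (p_ : 'I_n -> nat) (B : forall i, 'M[F]_(p_ i)) i0 :
  (forall i, i != i0 -> p_ i = 0%N) -> packmx (\mxdiag_i B i) = packmx (B i0).
Proof.
move=> p_0.
have e : (\sum_i p_ i = p_ i0)%N by rewrite (bigD1 i0) //= big1 ?addn0.
suff -> : \mxdiag_i B i = castmx (esym e, esym e) (B i0) by rewrite packmx_castmx.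
have in_block0 (s : 'I_(\sum_i p_ i)) :
    tagnat.sig1 s = i0 /\ (s : nat) = tagnat.sig2 s.
  have s1 : tagnat.sig1 s = i0.
    apply/eqP; apply/negP => /negP /p_0 h.
    by have := ltn_ord (tagnat.sig2 s); move: (tagnat.sig2 s : nat); rewrite h.
  split=> //; rewrite (tagnat.rect s) big1 ?add0n // => i lt_i.
  by apply: p_0; apply/negP => /eqP ei; rewrite ei s1 ltnn in lt_i.
apply/matrixP => j k; rewrite castmxE !mxE.
have [hj ej] := in_block0 j; have [hk ek] := in_block0 k.
move: ej ek; move: (tagnat.sig2 j) (tagnat.sig2 k).
move: (tagnat.sig1 j) (tagnat.sig1 k) hj hk => a b ? ?; subst a b.
move=> x y ex ey; rewrite eqxx conform_mx_id.
by congr (B i0 _ _); apply: val_inj; rewrite /= ?ex ?ey.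
Qed.

End PackedMatrices.

Lemma psizeE m n (r : 'rV[nat]_m) (R : 'M[nat]_(m, n)) a :
  psize r R a = (r *m R *m a) ord0 ord0.
Proof.
rewrite /psize mxE.
under [RHS]eq_bigr => j _ do rewrite mxE big_distrl /=.
by rewrite exchange_big.
Qed.

(* When row k of the outer rank matrix is e_i0 and only column j0 of the
   composite contributes, each block-diagonal factor of the composite gauge
   reduces to one block, and the composite gauge to st_k(Ra) s_i0(a). *)
Lemma comp_gauge_single (F : fieldType) (P : perm_datum F) n m p
    (f : mor1d F n m) (g : mor1d F m p) (a : 'cV[nat]_n) (k : 'I_p)
    (i0 : 'I_m) (j0 : 'I_n) (d : nat) (X : 'M[F]_d) :
  row k (rk g) = delta_mx ord0 i0 ->
  (forall j, j != j0 -> (rk g *m (rk f *m ebv j)) k ord0 = 0%N) ->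
  packmx (gauge g (rk f *m ebv j0) k) = packmx (1%:M : 'M[F]_1) ->
  packmx (gauge g (rk f *m a) k) = packmx (invmx X) ->
  packmx (gauge f a i0) = packmx X -> X \in unitmx ->
  a j0 ord0 = d -> ((rk g *m rk f) *m a) k ord0 = d ->
  packmx (comp_gauge P f g a k) = packmx (1%:M : 'M[F]_d).
Proof.
move=> row_k col_j0 g_ej0 g_a f_a X_unit a_j0 size_d.
have rk_gk i : rk g k i = (i == i0) :> nat.
  have := congr1 (fun M : 'M[nat]_(1, m) => M ord0 i) row_k.
  by rewrite !mxE /= => ->; case: (i == i0).
have A2 : packmx (\mxdiag_(i < m) ((1%:M : 'M[F]_(rk g k i)) *t gauge f a i))
    = packmx X.
  rewrite (packmx_mxdiag_single _ (i0 := i0)) ?packmx_tens1l ?rk_gk ?eqxx //.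
  by move=> i /negbTE ne_i; rewrite rk_gk ne_i.
have A3 : packmx (pmx P (row k (rk g)) (rk f) a) = packmx (1%:M : 'M[F]_d).
  have <- : psize (row k (rk g)) (rk f) a = d by rewrite psizeE -!row_mul mxE.
  by move: (row k (rk g)) row_k => r ->; rewrite pmx_id_row.
have A4 : packmx (\mxdiag_(j < n)
      (invmx (gauge g (rk f *m ebv j) k) *t (1%:M : 'M[F]_(a j ord0))))
    = packmx (1%:M : 'M[F]_d).
  rewrite (packmx_mxdiag_single _ (i0 := j0)); last by move=> j /col_j0 ->.
  by rewrite packmx_tens1r -?a_j0 // (packmx_invmx g_ej0) invmx1.
have A12 := packmx_cmul g_a A2; rewrite mulVmx // in A12.
have A123 := packmx_cmul A12 A3; rewrite mulmx1 in A123.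
have A1234 := packmx_cmul A123 A4; rewrite mulmx1 in A1234.
have [e1 e2] := packmx_dims A1234.
by rewrite packmx_conform // ?size_d ?e1 ?e2.
Qed.

Lemma perm_mx_mulE n (t : 'S_n) (x : 'cV[nat]_n) i :
  (perm_mx t *m x) i ord0 = x (t i) ord0.
Proof. by rewrite -row_permE mxE. Qed.

Lemma perm_mx_natE n (t : 'S_n) i j : perm_mx t i j = (t i == j) :> nat.
Proof. by rewrite !mxE; case: (t i == j). Qed.

Lemma perm_mx_ebv n (t : 'S_n) j : perm_mx t *m ebv j = ebv ((t^-1)%g j).
Proof.
apply/matrixP => i o; rewrite (ord1 o) perm_mx_mulE !mxE /= !andbT.
by rewrite -[in RHS](inj_eq (@perm_inj _ t)) permKV.
Qed.

Lemma perm_mxVK n (t : 'S_n) (x : 'cV[nat]_n) : perm_mx t^-1 *m (perm_mx t *m x) = x.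
Proof. by rewrite mulmxA -perm_mxM mulVg perm_mx1 mul1mx. Qed.

Lemma perm_mxKV n (t : 'S_n) (x : 'cV[nat]_n) : perm_mx t *m (perm_mx t^-1 *m x) = x.
Proof. by rewrite mulmxA -perm_mxM mulgV perm_mx1 mul1mx. Qed.

Section PermutationMorphism.
Variables (F : fieldType) (P : perm_datum F) (n : nat) (sg : 'S_n)
  (s : gauge_t F (perm_mx sg)).
Hypothesis s_mor1 : is_mor1 (Mor1d s).

(* The inverse gauge b, k |-> s_{sg^-1 k}(sg^-1 b)^-1; the conform_mx only
   casts along (sg^-1 b)_k = b_k. *)
Definition perm_inv_gauge : gauge_t F (perm_mx sg^-1) := fun b k =>
  conform_mx (1%:M : 'M[F]_((perm_mx sg^-1 *m b) k ord0))
    (invmx (s (perm_mx sg^-1 *m b) ((sg^-1)%g k))).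

Lemma perm_inv_gaugeE b k : packmx (perm_inv_gauge b k)
  = packmx (invmx (s (perm_mx sg^-1 *m b) ((sg^-1)%g k))).
Proof. by rewrite packmx_conform // perm_mx_mulE permKV. Qed.

Lemma perm_gauge_ebv j i :
  packmx (s (ebv j) i) = packmx (1%:M : 'M[F]_((sg i == j) : nat)).
Proof. by rewrite (dsq_packmx (s_mor1.2 i j)) /= perm_mx_natE. Qed.

Lemma perm_inv_gauge_mor1 : is_mor1 (Mor1d perm_inv_gauge).
Proof.
split=> [b k|k j] /=.
  by apply: (packmx_unitmx (perm_inv_gaugeE b k)); rewrite unitmx_inv s_mor1.1.
apply: packmx_dsq; rewrite perm_inv_gaugeE perm_mx_ebv invgK.
rewrite (packmx_invmx (perm_gauge_ebv _ _)) invmx1 perm_mx_natE; apply: packmx1.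
by rewrite -[in RHS](inj_eq (@perm_inj _ sg)) permKV.
Qed.

Lemma perm_mor1_invertible : invertible1 P (Mor1d s).
Proof.
exists (Mor1d perm_inv_gauge); split; first exact: perm_inv_gauge_mor1.
split; split.
- by rewrite /= -perm_mxM mulVg perm_mx1.
- move=> a k; apply: packmx_dsq.
  rewrite /= (@packmx1 _ _ ((perm_mx sg *m a) ((sg^-1)%g k) ord0));
    last by rewrite mul1mx perm_mx_mulE permKV.
  apply: (comp_gauge_single P (f := Mor1d s) (g := Mor1d perm_inv_gauge)
    (k := k) (i0 := (sg^-1)%g k) (j0 := k) (X := s a ((sg^-1)%g k))).
  + by apply/matrixP => o i; rewrite (ord1 o) !mxE /= eq_sym.
  + by move=> j ne_j /=; rewrite perm_mxVK /ebv mxE /= andbT eq_sym (negbTE ne_j).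
  + by rewrite /= perm_inv_gaugeE perm_mxVK (packmx_invmx (perm_gauge_ebv _ _))
      permKV eqxx invmx1.
  + by rewrite /= perm_inv_gaugeE perm_mxVK.
  + by [].
  + exact: s_mor1.1.
  + by rewrite perm_mx_mulE permKV.
  + by rewrite /= -mulmxA perm_mxVK perm_mx_mulE permKV.
- by rewrite /= -perm_mxM mulgV perm_mx1.
- move=> b i; apply: packmx_dsq.
  rewrite /= (@packmx1 _ _ ((perm_mx sg^-1 *m b) (sg i) ord0));
    last by rewrite mul1mx perm_mx_mulE permK.
  apply: (comp_gauge_single P (f := Mor1d perm_inv_gauge) (g := Mor1d s)
    (k := i) (i0 := sg i) (j0 := i) (X := perm_inv_gauge b (sg i))).
  + by apply/matrixP => o j; rewrite (ord1 o) !mxE /= eq_sym.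
  + by move=> j ne_j /=; rewrite perm_mxKV /ebv mxE /= andbT eq_sym (negbTE ne_j).
  + by rewrite /= perm_mx_ebv invgK perm_gauge_ebv eqxx.
  + by rewrite /= (packmx_invmx (perm_inv_gaugeE _ _)) invmxK permK.
  + by [].
  + exact: perm_inv_gauge_mor1.1.
  + by rewrite perm_mx_mulE permK.
  + by rewrite /= -mulmxA perm_mxKV perm_mx_mulE permK.
Qed.

End PermutationMorphism.

Lemma natmx1E n (i j : 'I_n) : (1%:M : 'M[nat]_n) i j = (i == j) :> nat.
Proof. by rewrite mxE; case: (i == j). Qed.

Lemma natmx_inv_row_delta m n (A : 'M[nat]_(m, n)) (B : 'M[nat]_(n, m)) :
  A *m B = 1%:M -> B *m A = 1%:M ->
  forall i, exists l, forall j, A i j = (l == j) :> nat.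
Proof.
move=> AB BA i.
have /existsP [l] : [exists l, (0 < A i l * B l i)%N].
  case: existsP => // no_l; exfalso.
  have := congr1 (fun M : 'M[nat]_m => M i i) AB.
  rewrite /= natmx1E eqxx mxE big1 // => l _.
  by apply/eqP; rewrite -leqn0 leqNgt; apply/negP => ?; apply: no_l; exists l.
rewrite muln_gt0 => /andP [A_il B_li]; exists l => j.
have BA_lj : (B l i * A i j <= (l == j))%N.
  have := congr1 (fun M : 'M[nat]_n => M l j) BA; rewrite /= natmx1E mxE => <-.
  by rewrite (bigD1 i) //= leq_addr.
have A_ij : (A i j <= (l == j))%N by apply: leq_trans BA_lj; rewrite leq_pmull.
case: eqP A_ij => [<-|] /= A_ij; last by rewrite leqn0 => /eqP.
by apply/eqP; rewrite eqn_leq A_ij A_il.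
Qed.

Lemma natmx_inv_perm m n (R : 'M[nat]_(m, n)) (G : 'M[nat]_(n, m)) :
  G *m R = 1%:M -> R *m G = 1%:M ->
  exists e : m = n, is_perm_mx (castmx (e, erefl n) R).
Proof.
move=> GR RG.
have [f Rf] := fin_all_exists (natmx_inv_row_delta RG GR).
have [g Gg] := fin_all_exists (natmx_inv_row_delta GR RG).
have gK : cancel f g.
  move=> i; have := congr1 (fun M : 'M[nat]_m => M i i) RG.
  rewrite /= natmx1E eqxx mxE (bigD1 (f i)) //= big1 ?addn0;
    last by move=> l ne_l; rewrite Rf eq_sym (negbTE ne_l).
  by rewrite Rf eqxx Gg; case: eqP.
have fK : cancel g f.
  move=> l; have := congr1 (fun M : 'M[nat]_n => M l l) GR.
  rewrite /= natmx1E eqxx mxE (bigD1 (g l)) //= big1 ?addn0;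
    last by move=> i ne_i; rewrite Gg eq_sym (negbTE ne_i).
  by rewrite Gg eqxx Rf; case: eqP.
have f_inj := can_inj gK.
have e : m = n.
  apply/eqP; rewrite eqn_leq.
  by have := leq_card f f_inj; have := leq_card g (can_inj fK); rewrite !card_ord => -> ->.
exists e; subst n; rewrite castmx_id.
apply/existsP; exists (perm f_inj); apply/eqP/matrixP => i j.
by rewrite Rf !mxE permE; case: (f i == j).
Qed.

Lemma iso2_rk (F : fieldType) n m (f g : mor1d F n m) : iso2 f g -> rk f = rk g.
Proof.
case=> T [T' [T'T TT']]; apply/matrixP => i j.
have := T'T i j; have := TT' i j; rewrite /vcomp /id2 => TT'1 T'T1.
apply/eqP; rewrite eqn_leq.
have := mxrankM_maxl (T' i j) (T i j); rewrite T'T1 mxrank1 => /leq_trans -> //;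
  last exact: rank_leq_col.
have := mxrankM_maxl (T i j) (T' i j); rewrite TT'1 mxrank1 => /leq_trans -> //.
exact: rank_leq_col.
Qed.

Lemma rk_iso2 (F : fieldType) n m (f g : mor1d F n m) : rk f = rk g -> iso2 f g.
Proof.
case: f g => [R s] [R' s'] /= eR; subst R'.
exists (fun i j => 1%:M); exists (fun i j => 1%:M).
by split=> i j; rewrite /vcomp /id2 mul1mx.
Qed.

Lemma mx_dim0_eq (F : fieldType) d (A B : 'M[F]_d) : d = 0%N -> A = B.
Proof. by move=> d0; apply/matrixP => i; have := ltn_ord i; rewrite {2}d0. Qed.

Lemma inv2_unitmxP (F : fieldType) n m (R : 'M[nat]_(m, n)) (s s2 : gauge_t F R)
    (T : mor2 (Mor1d s) (Mor1d s2)) :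
  inv2 T <-> (forall i j, R i j != 0%N -> T i j \in unitmx).
Proof.
split=> [[T' [_ TT']] i j _ | T_unit].
  by have := TT' i j; rewrite /vcomp /id2 => /mulmx1_unit [].
exists (fun i j => invmx (T i j)); split=> i j; rewrite /vcomp /id2 /=;
  (have [/eqP R0|/T_unit ?] := boolP (R i j == 0%N); first exact: mx_dim0_eq).
- exact: mulVmx.
- exact: mulmxV.
Qed.

Lemma invertible1_perm (F : fieldType) (P : perm_datum F) n m
    (R : 'M[nat]_(m, n)) (s : gauge_t F R) : is_mor1 (Mor1d s) ->
  invertible1 P (Mor1d s) <-> exists e : m = n, is_perm_mx (castmx (e, erefl n) R).
Proof.
move=> s_mor1; split=> [[g [_ [[gR _] [Rg _]]]] | [e]].
  by simpl in gR, Rg; exact: natmx_inv_perm gR Rg.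
subst m; rewrite castmx_id => /existsP [sg /eqP eR]; subst R.
exact: perm_mor1_invertible.
Qed.

Lemma equivalence1_invertible (F : fieldType) (P : perm_datum F) n m
    (R : 'M[nat]_(m, n)) (s : gauge_t F R) : is_mor1 (Mor1d s) ->
  equivalence1 P (Mor1d s) <-> invertible1 P (Mor1d s).
Proof.
move=> s_mor1; split=> [[g [_ [gf fg]]] | [g [g_mor1 [[gR _] [Rg _]]]]].
  have gR : rk g *m R = 1%:M := iso2_rk gf.
  have Rg : R *m rk g = 1%:M := iso2_rk fg.
  by apply/(invertible1_perm P s_mor1); exact: natmx_inv_perm gR Rg.
by exists g; split=> //; split; [exact: rk_iso2 gR | exact: rk_iso2 Rg].
Qed.

Theorem mainTheorem5 (Rr : realType) (P : perm_datum Rr[i]) (n m : nat)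
  (hn : (0 < n)%N) (hm : (0 < m)%N)
  (R R' : 'M[nat]_(m, n)) (s : gauge_t Rr[i] R) (s' : gauge_t Rr[i] R') :
  is_mor1 (Mor1d s) -> is_mor1 (Mor1d s') ->
  [/\ (invertible1 P (Mor1d s) <->
        exists e : m = n, is_perm_mx (castmx (e, erefl n) R)),
      (iso2 (Mor1d s) (Mor1d s') <-> R = R'),
      (forall (s2 : gauge_t Rr[i] R), is_mor1 (Mor1d s2) ->
         forall T : mor2 (Mor1d s) (Mor1d s2),
           inv2 T <-> (forall i j, R i j != 0%N -> T i j \in unitmx))
    & (equivalence1 P (Mor1d s) <-> invertible1 P (Mor1d s))].
Proof.
move=> s_mor1 _; split.
- exact: invertible1_perm.
- by split; [exact: iso2_rk | exact: (@rk_iso2 _ _ _ (Mor1d s) (Mor1d s'))].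
- by move=> s2 _ T; exact: inv2_unitmxP.
- exact: equivalence1_invertible.
Qed.
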